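(* Let $W$ be a finite set of possible worlds and let $\bullet$ be an operator assigning to every pair $(G_1,G_2)$ of belief algebras on $W$ a belief algebra $G_1\bullet G_2$ on $W$, and suppose $\bullet$ satisfies the postulates (RA1)–(RA6) described in the context. Then for any belief algebras $G_1,G_2$ on $W$, the revision result $G_1\bullet G_2$ is unique, and $$G_1\bullet G_2=\operatorname{Gen}\big((G_1\cup G_2)\cap (\operatorname{Com}(G_1)\bullet \operatorname{Com}(G_2))\big).$$
   Context: $W$ is a finite nonempty set (the possible worlds of a finite propositional language). Let $R_W=\{(U,V)\mid U,V\subseteq W,\ U\cap V=\varnothing\}$. A belief algebra on $W$ is a pair $(2^W,\gg)$, where $\gg$ is a binary relation on $2^W$ satisfying, for all $U,V,U_1,V_1,U_2,V_2\subseteq W$: (A0) $\gg\subseteq R_W$; (A1) $U\gg\varnothing$ iff $U\neq\varnothing$; (A2) if $U\gg V$ then not $V\gg U$; (A3) if $U_1\supseteq U$, $U\gg V$, $V\supseteq V_1$ and $U_1\cap V_1=\varnothing$, then $U_1\gg V_1$; (A4) if $U=U_1\cup V_1=U_2\cup V_2$, $U_1\gg V_1$ and $U_2\gg V_2$, then $U_1\cap U_2\gg V_1\cup V_2$. A belief algebra is identified with its relation $\gg$, viewed as a set of pairs; $(U,V)\in G$ means $U\gg V$, and $\subseteq,\cup,\cap$ between belief algebras refer to these sets of pairs. For $\Omega\subseteq R_W$, $\operatorname{Gen}(\Omega)$ is the smallest subset of $R_W$ containing $\Omega$ and closed under: (i) it contains $(U,\varnothing)$ for every nonempty $U\subseteq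 W$; (ii) if $(U,V)$ is in it, $U\subseteq U_1$, $V_1\subseteq V$, $U_1\cap V_1=\varnothing$, then $(U_1,V_1)$ is in it; (iii) if $U_1\cup V_1=U_2\cup V_2$ and $(U_1,V_1),(U_2,V_2)$ are in it, then $(U_1\cap U_2,V_1\cup V_2)$ is in it; when $\operatorname{Gen}(\Omega)$ satisfies (A2) it is regarded as a belief algebra. Total preorders: for a total preorder $\preceq$ on $W$, write $\omega\prec\omega'$ iff $\omega\preceq\omega'$ and not $\omega'\preceq\omega$. The relation defined by $U\gg V$ iff $U\cap V=\varnothing$ and there is $\omega_1\in U$ with $\omega_1\prec\omega_2$ for all $\omega_2\in V$ is a belief algebra; belief algebras arising this way are called complete belief algebras (CBAs). Backbone: every belief algebra $(2^W,\gg)$ has a unique backbone, a sequence $U_1,\dots,U_n$ of nonempty pairwise disjoint sets with union $W$, such that $U_i\gg U_{i+1}$ for all $i<n$ and, for each $i$, any two disjoint nonempty subsets $V_1,V_2$ of $U_i$ are incomparable under $\gg$. For nonempty $V\subseteq W$, the support $I(V)$ of $V$ (w.r.t. this backbone) is $U_i$ for the least index $i$ with $V\cap U_i\neq\varnothing$. $\operatorname{Com}(G)$ denotes the unique CBA that contains $G$ and has the same backbone as $G$ (explicitly, the CBA of the total preorder with $\omega\preceq\omega'$ iff the backbone block containing $\omega$ has index $\le$ that of the block containing $\omega'$). Write $G_1\leq G_2$ iff $G_1,G_2$ have the same backbone and $G_1\subseteq G_2$. Postulates for $\bullet$ (for all belief algebras $G_1=(2^W,\gg_1)$, $G_2=(2^W,\gg_2)$,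 $G_1',G_2'$): (RA1) $G_2\subseteq G_1\bullet G_2$. (RA2) There is $\Omega\subseteq G_1\cup G_2$ with $G_1\bullet G_2=\operatorname{Gen}(\Omega)$. (RA3) If $G_1,G_2$ are CBAs then $G_1\bullet G_2$ is a CBA. (RA4) If $G_1,G_2$ are CBAs and $\omega,\omega'\in W$ satisfy $I_2(\{\omega\})=I_2(\{\omega'\})$, where $I_2$ is the support w.r.t. the backbone of $G_2$, then $(\{\omega\},\{\omega'\})\in G_1\bullet G_2$ iff $\{\omega\}\gg_1\{\omega'\}$. (RA5) If $G_1\leq G_1'$ and $G_2\leq G_2'$ then $G_1\bullet G_2\subseteq G_1'\bullet G_2'$. (RA6) If $\Omega\subseteq G_1\cup G_2$, $\operatorname{Gen}(\Omega)\subseteq \operatorname{Com}(G_1)\bullet\operatorname{Com}(G_2)$ and $G_1\bullet G_2\subseteq\operatorname{Gen}(\Omega)$, then $G_1\bullet G_2=\operatorname{Gen}(\Omega)$. *)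

From mathcomp Require Import all_boot.
Set Implicit Arguments. Unset Strict Implicit. Unset Printing Implicit Defensive.

Section BeliefAlgebras.
Variable W : finType.

(* a binary relation on 2^W; (U,V) \in G is  G U V *)
Definition brel := {set W} -> {set W} -> Prop.

Definition brel_sub (G H : brel) : Prop := forall U V, G U V -> H U V.
Definition brel_eq (G H : brel) : Prop := forall U V, G U V <-> H U V.
Definition brel_union (G H : brel) : brel := fun U V => G U V \/ H U V.
Definition brel_inter (G H : brel) : brel := fun U V => G U V /\ H U V.

Definition RW : brel := fun U V => U :&: V = set0.

Definition belief_algebra (G : brel) : Prop :=
  [/\ (forall U V : {set W}, G U V -> U :&: V = set0),
      (forall U : {set W}, G U set0 <-> U != set0),
      (forall U V : {set W}, G U V -> ~ G V U),
      (forall U V U1 V1 : {set W}, U \subset U1 -> G U V -> V1 \subset V ->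
          U1 :&: V1 = set0 -> G U1 V1) &
      (forall U1 V1 U2 V2 : {set W}, U1 :|: V1 = U2 :|: V2 -> G U1 V1 -> G U2 V2 ->
          G (U1 :&: U2) (V1 :|: V2))].

Definition gen_closed (S : brel) : Prop :=
  [/\ (forall U : {set W}, U != set0 -> S U set0),
      (forall U V U1 V1 : {set W}, S U V -> U \subset U1 -> V1 \subset V ->
          U1 :&: V1 = set0 -> S U1 V1) &
      (forall U1 V1 U2 V2 : {set W}, U1 :|: V1 = U2 :|: V2 -> S U1 V1 -> S U2 V2 ->
          S (U1 :&: U2) (V1 :|: V2))].

Definition Gen (Omega : brel) : brel := fun U V =>
  forall S : brel, brel_sub S RW -> brel_sub Omega S -> gen_closed S -> S U V.

Definition total_preorder (le : W -> W -> Prop) : Prop :=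
  (forall x y, le x y \/ le y x) /\ (forall x y z, le x y -> le y z -> le x z).

Definition strict_of (le : W -> W -> Prop) (x y : W) : Prop := le x y /\ ~ le y x.

Definition ba_of_preorder (le : W -> W -> Prop) : brel := fun U V =>
  U :&: V = set0 /\ exists2 w1, w1 \in U & forall w2, w2 \in V -> strict_of le w1 w2.

Definition CBA (G : brel) : Prop :=
  exists le, total_preorder le /\ brel_eq G (ba_of_preorder le).

(* backbone U_1,...,U_n (as a sequence, 0-indexed) *)
Definition backbone (G : brel) (s : seq {set W}) : Prop :=
  [/\ (forall i, i < size s -> nth set0 s i != set0),
      (forall i j, i < size s -> j < size s -> i != j ->
          nth set0 s i :&: nth set0 s j = set0),
      \bigcup_(B <- s) B = setT,
      (forall i, i.+1 < size s -> G (nth set0 s i) (nth set0 s i.+1)) &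
      (forall i (V1 V2 : {set W}), i < size s -> V1 \subset nth set0 s i ->
          V2 \subset nth set0 s i -> V1 :&: V2 = set0 -> V1 != set0 ->
          V2 != set0 -> ~ G V1 V2 /\ ~ G V2 V1)].

Definition support (s : seq {set W}) (V : {set W}) : {set W} :=
  nth set0 s (find (fun B : {set W} => V :&: B != set0) s).

Definition block_index (s : seq {set W}) (w : W) : nat := find (fun B : {set W} => w \in B) s.

Definition backbone_preorder (s : seq {set W}) (w w' : W) : Prop :=
  block_index s w <= block_index s w'.

Definition Com (G : brel) : brel := fun U V =>
  exists2 s, backbone G s & ba_of_preorder (backbone_preorder s) U V.

Definition same_backbone (G1 G2 : brel) : Prop :=
  exists s, backbone G1 s /\ backbone G2 s.

Definition ba_le (G1 G2 : brel) : Prop := same_backbone G1 G2 /\ brel_sub G1 G2.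

Definition RA0 (op : brel -> brel -> brel) : Prop :=
  forall G1 G2, belief_algebra G1 -> belief_algebra G2 -> belief_algebra (op G1 G2).

Definition RA1 (op : brel -> brel -> brel) : Prop :=
  forall G1 G2, belief_algebra G1 -> belief_algebra G2 -> brel_sub G2 (op G1 G2).

Definition RA2 (op : brel -> brel -> brel) : Prop :=
  forall G1 G2, belief_algebra G1 -> belief_algebra G2 ->
    exists Omega, brel_sub Omega (brel_union G1 G2) /\ brel_eq (op G1 G2) (Gen Omega).

Definition RA3 (op : brel -> brel -> brel) : Prop :=
  forall G1 G2, CBA G1 -> CBA G2 -> CBA (op G1 G2).

Definition RA4 (op : brel -> brel -> brel) : Prop :=
  forall G1 G2 s (w w' : W), CBA G1 -> CBA G2 -> backbone G2 s ->
    support s [set w] = support s [set w'] ->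
    (op G1 G2 [set w] [set w'] <-> G1 [set w] [set w']).

Definition RA5 (op : brel -> brel -> brel) : Prop :=
  forall G1 G2 G1' G2', belief_algebra G1 -> belief_algebra G2 ->
    belief_algebra G1' -> belief_algebra G2' ->
    ba_le G1 G1' -> ba_le G2 G2' -> brel_sub (op G1 G2) (op G1' G2').

Definition RA6 (op : brel -> brel -> brel) : Prop :=
  forall G1 G2 Omega, belief_algebra G1 -> belief_algebra G2 ->
    brel_sub Omega (brel_union G1 G2) ->
    brel_sub (Gen Omega) (op (Com G1) (Com G2)) ->
    brel_sub (op G1 G2) (Gen Omega) ->
    brel_eq (op G1 G2) (Gen Omega).

End BeliefAlgebras.

From mathcomp Require Import all_boot zify.
From Stdlib Require Import Classical.
Set Implicit Arguments. Unset Strict Implicit. Unset Printing Implicit Defensive.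

(* Every belief algebra G has a backbone: its first block is a smallest U with
   U >> (W \ U), and the remaining blocks form a backbone of the rest.  The
   block indices of any two backbones agree, and G is contained in the
   complete belief algebra of its block order; hence Com G is a belief algebra
   with G <= Com G, and RA5 gives G1 * G2 \subset Com G1 * Com G2.  Writing
   G1 * G2 = Gen Omega with Omega \subset G1 \cup G2 (RA2), Omega lies in
   Omega' := (G1 \cup G2) \cap (Com G1 * Com G2), so G1 * G2 \subset Gen Omega';
   conversely Gen Omega' \subset Com G1 * Com G2, a belief algebra containing
   Omega'.  RA6 then forces G1 * G2 = Gen Omega'. *)

Section BeliefAlgebraFacts.
Variables (W : finType) (G : brel W).
Hypothesis HG : belief_algebra G.

Lemma ba_left_neq0 U V : G U V -> U != set0.
Proof.
have [_ A1 _ A3 _] := HG => GUV; apply/negP => /eqP U0.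
have : G set0 set0 by apply: (A3 _ _ _ _ _ GUV); rewrite ?U0 ?sub0set ?setI0.
by move/A1; rewrite eqxx.
Qed.

Lemma ba_trans_union U V X : U :&: X = set0 -> G U V -> G V X -> G U (V :|: X).
Proof.
have [A0 _ _ A3 A4] := HG => UX GUV GVX.
have DUV := A0 _ _ GUV; have DVX := A0 _ _ GVX.
have GUX_V : G (U :|: X) V.
  by apply: (A3 _ _ _ _ _ GUV); rewrite ?subsetUl // setIUl DUV setIC DVX setU0.
have GUV_X : G (U :|: V) X.
  by apply: (A3 _ _ _ _ _ GVX); rewrite ?subsetUr // setIUl UX DVX setU0.
have := A4 _ _ _ _ _ GUX_V GUV_X; rewrite -setUIr (setIC X) DVX setU0; apply.
by rewrite setUAC.
Qed.

End BeliefAlgebraFacts.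

Lemma ba_of_preorder_belief_algebra (W : finType) (le : W -> W -> Prop) :
  total_preorder le -> belief_algebra (ba_of_preorder le).
Proof.
case=> le_total le_trans.
have lt_asym x y : strict_of le x y -> strict_of le y x -> False by move=> [? _] [].
have le_lt_trans x y z : le x y -> strict_of le y z -> strict_of le x z.
  move=> lexy [leyz Nlezy]; split; first exact: le_trans lexy leyz.
  by move=> lezx; apply: Nlezy; apply: le_trans lezx lexy.
have meet U1 V1 U2 V2 w1 w2 : U1 :|: V1 = U2 :|: V2 ->
    w1 \in U1 -> (forall v, v \in V1 -> strict_of le w1 v) ->
    (forall v, v \in V2 -> strict_of le w2 v) -> le w1 w2 ->
    exists2 w, w \in U1 :&: U2 & forall v, v \in V1 :|: V2 -> strict_of le w v.
  move=> E w1U lt1 lt2 le12; exists w1.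
    have : w1 \in U2 :|: V2 by rewrite -E inE w1U.
    rewrite !inE w1U => /orP [//|/lt2 [_ []] //].
  by move=> v; rewrite inE => /orP [/lt1 //|/lt2]; apply: le_lt_trans.
split.
- by move=> U V [].
- move=> U; split=> [[_ [w wU _]]|/set0Pn [w wU]]; first by apply/set0Pn; exists w.
  by split; [rewrite setI0 | exists w => // v; rewrite inE].
- by move=> U V [_ [w wU ltw]] [_ [v vV ltv]]; apply: (lt_asym w v); [apply: ltw | apply: ltv].
- move=> U V U1 V1 sUU1 [_ [w wU ltw]] sV1V D; split=> //.
  by exists w => [|v /(subsetP sV1V)]; [apply: (subsetP sUU1) | apply: ltw].
- move=> U1 V1 U2 V2 E [D1 [w1 w1U lt1]] [D2 [w2 w2U lt2]]; split.
    by rewrite setIUr setIAC D1 set0I -setIA D2 setI0 setU0.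
  have [le12|le21] := le_total w1 w2; first exact: meet E w1U lt1 lt2 le12.
  by rewrite setIC setUC; apply: meet (esym E) w2U lt2 lt1 le21.
Qed.

Section Transport.
Variables (W : finType) (G H : brel W).
Hypothesis GH : brel_eq G H.

Lemma belief_algebra_eq : belief_algebra G -> belief_algebra H.
Proof.
case=> A0 A1 A2 A3 A4; split.
- by move=> U V /GH /A0.
- by move=> U; rewrite -A1; split=> /GH.
- by move=> U V /GH GUV /GH; apply: A2.
- by move=> U V U1 V1 sUU1 /GH GUV sV1V D; apply/GH; exact: (A3 _ _ _ _ sUU1 GUV sV1V D).
- by move=> U1 V1 U2 V2 E /GH G1 /GH G2; apply/GH; apply: A4.
Qed.

Lemma backbone_eq s : backbone G s -> backbone H s.
Proof.
case=> B1 B2 B3 B4 B5; split=> // [i lti | i V1 V2 lti S1 S2 D N1 N2].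
  by apply/GH; apply: B4.
by have [N12 N21] := B5 i V1 V2 lti S1 S2 D N1 N2; split=> /GH.
Qed.

End Transport.

Section Generation.
Variables (W : finType) (Omega : brel W).

Lemma sub_Gen : brel_sub Omega (Gen Omega).
Proof. by move=> U V OUV S _ OS _; apply: OS. Qed.

Lemma Gen_mono Omega' : brel_sub Omega Omega' -> brel_sub (Gen Omega) (Gen Omega').
Proof. by move=> sub U V GUV S SR OS cl; apply: GUV => // X Y /sub /OS. Qed.

Lemma Gen_min H : belief_algebra H -> brel_sub Omega H -> brel_sub (Gen Omega) H.
Proof.
case=> A0 A1 _ A3 A4 OH U V; apply; [by move=> X Y /A0 | by [] | split].
- by move=> X /A1.
- by move=> X Y X1 Y1 HXY sXX1 sY1Y D; apply: (A3 _ _ _ _ sXX1 HXY sY1Y D).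
- exact: A4.
Qed.

End Generation.

Lemma backbone_preorder_total (W : finType) (s : seq {set W}) :
  total_preorder (backbone_preorder s).
Proof. by split=> [x y | x y z]; [apply/orP; exact: leq_total | exact: leq_trans]. Qed.

Section Backbone.
Variables (W : finType) (G : brel W) (s : seq {set W}).
Hypothesis Hs : backbone G s.
Local Notation idx := (block_index s).

Lemma block_index_lt w : idx w < size s.
Proof.
have [_ _ cover _ _] := Hs; rewrite /block_index -has_find; apply/hasP.
have : w \in \bigcup_(B <- s) B by rewrite cover inE.
by rewrite bigcup_seq => /bigcupP [B Bs wB]; exists B.
Qed.

Lemma mem_nth_backbone i w : i < size s -> (w \in nth set0 s i) = (idx w == i).
Proof.
have [_ disj _ _ _] := Hs => lti.
have w_idx : w \in nth set0 s (idx w).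
  by apply: (@nth_find _ set0 (fun B : {set W} => w \in B)); rewrite has_find block_index_lt.
apply/idP/eqP => [wi|<- //]; apply/eqP; apply: contraT => neq.
by have /setP/(_ w) := disj _ _ (block_index_lt w) lti neq; rewrite !inE w_idx wi.
Qed.

Lemma strict_backbone_preorder x y :
  strict_of (backbone_preorder s) x y <-> idx x < idx y.
Proof.
rewrite /strict_of /backbone_preorder ltnNge.
by split=> [[_ /negP] | /negP lt]; last split=> //; lia.
Qed.

Lemma backbone_of_backbone_preorder : backbone (ba_of_preorder (backbone_preorder s)) s.
Proof.
have [B1 B2 B3 _ _] := Hs; split=> // [i lti | i V1 V2 lti S1 S2 D N1 N2].
  split; first by apply: B2 => //; lia.
  have /set0Pn [w wi] := B1 i (ltnW lti); exists w => // v.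
  rewrite strict_backbone_preorder !mem_nth_backbone ?(ltnW lti) // in wi *.
  by move=> /eqP ->; move/eqP: wi => ->.
have in_i (V : {set W}) x : V \subset nth set0 s i -> x \in V -> idx x = i.
  by move=> sV /(subsetP sV); rewrite mem_nth_backbone // => /eqP.
have /set0Pn [x1 x1V] := N1; have /set0Pn [x2 x2V] := N2.
split=> -[_ [w wV /(_ _ _)/strict_backbone_preorder lt]].
  by have := lt _ x2V; rewrite (in_i _ _ S1 wV) (in_i _ _ S2 x2V) ltnn.
by have := lt _ x1V; rewrite (in_i _ _ S2 wV) (in_i _ _ S1 x1V) ltnn.
Qed.

Hypothesis HG : belief_algebra G.

Lemma backbone_block_later k : k < size s -> G (nth set0 s k) [set w | k < idx w].
Proof.
have [_ A1 _ _ _] := HG; have [B1 _ _ B4 _] := Hs.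
move=> ltk; have [n] : exists n, k + n.+1 = size s by exists (size s - k.+1); lia.
elim: n k {ltk} => [|n IH] k Hn.
  have -> : [set w | k < idx w] = set0.
    by apply/setP=> w; rewrite !inE; have := block_index_lt w; lia.
  by apply/A1/B1; lia.
have ltk : k.+1 < size s by lia.
have -> : [set w | k < idx w] = nth set0 s k.+1 :|: [set w | k.+1 < idx w].
  by apply/setP=> w; rewrite !inE mem_nth_backbone //; lia.
apply: (ba_trans_union HG _ (B4 k ltk) (IH k.+1 _)); last lia.
by apply/setP=> w; rewrite !inE mem_nth_backbone; lia.
Qed.

Lemma backbone_lt_witness U V :
  G U V -> exists2 u, u \in U & forall v, v \in V -> idx u < idx v.
Proof.
have [A0 _ _ A3 A4] := HG; have [_ _ _ _ B5] := Hs => GUV.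
have /set0Pn [u0 u0U] := ba_left_neq0 HG GUV.
have [u uU u_min] := arg_minnP idx u0U.
have [V0 | [v0 v0V]] := set_0Vmem V; first by exists u => // v; rewrite V0 inE.
have [v vV v_min] := arg_minnP idx v0V; have {}vV : v \in V := vV.
have [ltuv | leuv] := ltnP (idx u) (idx v).
  by exists u => // v' /v_min; apply: leq_trans.
(* Otherwise U lies in the blocks from j := idx v on; combined (A4) with the
   dominance of block j over the later blocks, this makes the rest of block j
   dominate v, which is impossible inside a block. *)
pose j := idx v; have ltj : j < size s by apply: block_index_lt.
have vNU : v \notin U by apply/negP => vU; move/setP/(_ v): (A0 _ _ GUV); rewrite !inE vU vV.
have h1 : G ([set w | j <= idx w] :\ v) [set v].
  apply: (A3 _ _ _ _ _ GUV).
  - apply/subsetP=> w wU; rewrite !inE (leq_trans leuv (u_min _ wU)) andbT.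
    by apply/eqP => wv; rewrite -wv wU in vNU.
  - by rewrite sub1set.
  - by apply/setP=> w; rewrite !inE; case: (w == v); rewrite ?andbF.
have E : ([set w | j <= idx w] :\ v) :|: [set v] = nth set0 s j :|: [set w | j < idx w].
  apply/setP=> w; rewrite !inE mem_nth_backbone //.
  by case: (eqVneq w v) => [->|_] /=; rewrite ?eqxx ?orbT //; lia.
have h2 : G (nth set0 s j :\ v) [set v].
  apply: (A3 _ _ _ _ _ (A4 _ _ _ _ E h1 (backbone_block_later ltj))).
  - by apply/subsetP=> w; rewrite !inE => /andP [/andP [-> _] ->].
  - exact: subsetUl.
  - by apply/setP=> w; rewrite !inE; case: (w == v); rewrite ?andbF.
have [] := B5 j (nth set0 s j :\ v) [set v] ltj (subsetDl _ _) _ _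
  (ba_left_neq0 HG h2) _.
- by rewrite sub1set mem_nth_backbone.
- by apply/setP=> w; rewrite !inE; case: (w == v); rewrite ?andbF.
- by apply/set0Pn; exists v; rewrite inE.
- by [].
Qed.

Lemma ba_sub_backbone_preorder : brel_sub G (ba_of_preorder (backbone_preorder s)).
Proof.
have [A0 _ _ _ _] := HG => U V GUV; split; first exact: A0.
have [u uU ltu] := backbone_lt_witness GUV.
by exists u => // v /ltu /strict_backbone_preorder.
Qed.

End Backbone.

Lemma block_index_backbone_unique (W : finType) (G : brel W) s s' :
  belief_algebra G -> backbone G s -> backbone G s' -> block_index s =1 block_index s'.
Proof.
suff le_idx t t' : belief_algebra G -> backbone G t -> backbone G t' ->
    forall w, block_index t' w <= block_index t w.
  by move=> HG Hs Hs' w; apply/eqP; rewrite eqn_leq !le_idx.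
move=> HG Ht Ht' w; have [c wc] : exists c, block_index t' w = c by exists (block_index t' w).
elim: c w wc => [|c IH] w wc; first by rewrite wc.
have ltc : c < size t' by have := block_index_lt Ht' w; lia.
have [v] := backbone_lt_witness Ht HG (backbone_block_later Ht' HG ltc).
rewrite (mem_nth_backbone Ht') // => /eqP vc /(_ w); rewrite inE wc ltnSn => /(_ isT).
by have := IH v vc; rewrite vc; apply: leq_ltn_trans.
Qed.

Lemma ex_min_card (T : finType) (P : {set T} -> Prop) X :
  P X -> exists2 U, P U & forall Y, P Y -> #|U| <= #|Y|.
Proof.
elim: {X}_.+1 {-2}X (ltnSn #|X|) => // n IH X ltXn PX.
have [[Y PY ltYX] | noY] := classic (exists2 Y, P Y & #|Y| < #|X|).
  by apply: (IH Y) => //; lia.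
by exists X => // Y PY; rewrite leqNgt; apply/negP => ltYX; apply: noY; exists Y.
Qed.

Section BackboneExistence.
Variables (W : finType) (G : brel W).
Hypothesis HG : belief_algebra G.

(* [backbone G s] is [backbone_on G [set: W] s] by conversion. *)
Definition backbone_on (Y : {set W}) (s : seq {set W}) : Prop :=
  [/\ (forall i, i < size s -> nth set0 s i != set0),
      (forall i j, i < size s -> j < size s -> i != j ->
          nth set0 s i :&: nth set0 s j = set0),
      \bigcup_(B <- s) B = Y,
      (forall i, i.+1 < size s -> G (nth set0 s i) (nth set0 s i.+1)) &
      (forall i (V1 V2 : {set W}), i < size s -> V1 \subset nth set0 s i ->
          V2 \subset nth set0 s i -> V1 :&: V2 = set0 -> V1 != set0 ->
          V2 != set0 -> ~ G V1 V2 /\ ~ G V2 V1)].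

Lemma min_head_incomparable (Y U V1 V2 : {set W}) :
  U \subset Y -> G U (Y :\: U) ->
  (forall X : {set W}, X \subset Y -> G X (Y :\: X) -> #|U| <= #|X|) ->
  V1 \subset U -> V2 \subset U -> V1 :&: V2 = set0 -> V2 != set0 -> ~ G V1 V2.
Proof.
(* G V1 V2 would allow V2 to be removed from the head U, against minimality. *)
have [_ _ _ A3 A4] := HG => sUY GU U_min sV1U sV2U D V2n GV12.
have G' : G (Y :\: V2) V2.
  apply: (A3 _ _ _ _ _ GV12) => //;
    last by rewrite setDE -setIA [~: V2 :&: _]setIC setICr setI0.
  apply/subsetP=> x xV1; rewrite inE (subsetP sUY _ (subsetP sV1U _ xV1)) andbT.
  by apply: contraT; rewrite negbK => xV2; move/setP/(_ x): D; rewrite !inE xV1 xV2.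
have E : (Y :\: V2) :|: V2 = U :|: (Y :\: U).
  apply/setP=> x; rewrite !inE.
  move: (subsetP sUY x) (subsetP sV2U x) => /implyP + /implyP.
  by case: (x \in Y); case: (x \in U); case: (x \in V2).
have EU : (Y :\: V2) :&: U = U :\: V2 by rewrite setIC setIDA (setIidPl sUY).
have EV : V2 :|: (Y :\: U) = Y :\: (U :\: V2).
  apply/setP=> x; rewrite !inE.
  move: (subsetP sUY x) (subsetP sV2U x) => /implyP + /implyP.
  by case: (x \in Y); case: (x \in U); case: (x \in V2).
have := A4 _ _ _ _ E G' GU; rewrite EU EV => /(U_min _ (subset_trans (subsetDl U V2) sUY)).
by rewrite cardsD (setIidPr sV2U) -card_gt0 in V2n *; have := subset_leq_card sV2U; lia.
Qed.

Lemma backbone_on_cons (Y U : {set W}) s :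
  U \subset Y -> U != set0 -> G U (Y :\: U) ->
  (forall V1 V2 : {set W}, V1 \subset U -> V2 \subset U -> V1 :&: V2 = set0 ->
     V2 != set0 -> ~ G V1 V2) ->
  backbone_on (Y :\: U) s -> backbone_on Y (U :: s).
Proof.
have [_ _ _ A3 _] := HG => sUY Un GU incU [B1 B2 B3 B4 B5].
have sub_rest j : j < size s -> nth set0 s j \subset Y :\: U.
  by move=> ltj; rewrite -B3 bigcup_seq (bigcup_sup (nth set0 s j)) ?mem_nth.
have disj_head j : j < size s -> U :&: nth set0 s j = set0.
  move=> /sub_rest/subsetP sj; apply/setP=> x; rewrite !inE.
  case: (boolP (x \in nth set0 s j)) => [/sj|]; rewrite ?inE ?andbF //.
  by case/andP=> /negbTE ->.
split.
- by case=> [|i] //= /B1.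
- case=> [|i] [|j] //= lti ltj neq; first exact: disj_head.
    by rewrite setIC disj_head.
  exact: B2.
- by rewrite big_cons B3 setDE setUIr setUCr setIT (setUidPr sUY).
- case=> [|i] /= lti; last exact: B4.
  exact: (A3 _ _ _ _ (subxx U) GU (sub_rest 0 lti) (disj_head 0 lti)).
- case=> [|i] V1 V2 /= lti; last exact: B5.
  move=> S1 S2 D N1 N2; split; first exact: incU.
  by apply: incU; rewrite // setIC.
Qed.

Lemma exists_backbone_on (Y : {set W}) : exists s, backbone_on Y s.
Proof.
have [_ A1 _ _ _] := HG.
elim: {Y}_.+1 {-2}Y (ltnSn #|Y|) => // n IH Y ltYn.
have [-> | Yn] := eqVneq Y set0; first by exists [::]; split; rewrite ?big_nil.
pose head_cand (X : {set W}) := X \subset Y /\ G X (Y :\: X).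
have [U [sUY GU] U_min] : exists2 U, head_cand U & forall X, head_cand X -> #|U| <= #|X|.
  by apply: ex_min_card; split; rewrite ?setDv ?subxx //; apply/A1.
have Un := ba_left_neq0 HG GU.
have [s Hs] : exists s, backbone_on (Y :\: U) s.
  apply: IH; rewrite cardsD (setIidPr sUY); move: Un; rewrite -card_gt0.
  by have := subset_leq_card sUY; lia.
exists (U :: s); apply: backbone_on_cons => // V1 V2.
by apply: min_head_incomparable sUY GU (fun X sXY GX => U_min X (conj sXY GX)).
Qed.

Lemma exists_backbone : exists s, backbone G s.
Proof. exact: exists_backbone_on. Qed.

End BackboneExistence.

Section Completion.
Variables (W : finType) (G : brel W).
Hypothesis HG : belief_algebra G.

Lemma ComE s : backbone G s -> brel_eq (Com G) (ba_of_preorder (backbone_preorder s)).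
Proof.
move=> Hs U V; split=> [[s' Hs' [D [w wU ltw]]] | GUV]; last by exists s.
split=> //; exists w => // v /ltw.
by rewrite /strict_of /backbone_preorder !(block_index_backbone_unique HG Hs Hs').
Qed.

Lemma Com_belief_algebra : belief_algebra (Com G).
Proof.
have [s Hs] := exists_backbone HG.
apply: (belief_algebra_eq (fun U V => iff_sym (ComE Hs U V))).
exact/ba_of_preorder_belief_algebra/backbone_preorder_total.
Qed.

Lemma ba_le_Com : ba_le G (Com G).
Proof.
have [s Hs] := exists_backbone HG; split.
  exists s; split=> //.
  exact: (backbone_eq (fun U V => iff_sym (ComE Hs U V)) (backbone_of_backbone_preorder Hs)).
by move=> U V /(ba_sub_backbone_preorder Hs HG) /(ComE Hs U V).
Qed.

End Completion.

Theorem theorem5 (W : finType) (op : brel W -> brel W -> brel W) :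
  0 < #|W| ->
  RA0 op -> RA1 op -> RA2 op -> RA3 op -> RA4 op -> RA5 op -> RA6 op ->
  forall G1 G2 : brel W, belief_algebra G1 -> belief_algebra G2 ->
    brel_eq (op G1 G2)
      (Gen (brel_inter (brel_union G1 G2) (op (Com G1) (Com G2)))).
Proof.
move=> _ RA0op _ RA2op _ _ RA5op RA6op G1 G2 HG1 HG2.
have HC1 := Com_belief_algebra HG1; have HC2 := Com_belief_algebra HG2.
have op_sub_Com : brel_sub (op G1 G2) (op (Com G1) (Com G2)).
  exact: (RA5op _ _ _ _ HG1 HG2 HC1 HC2 (ba_le_Com HG1) (ba_le_Com HG2)).
have [Omega [Omega_sub opE]] := RA2op _ _ HG1 HG2.
apply: RA6op => //.
- by move=> U V [].
- by apply: Gen_min (RA0op _ _ HC1 HC2) _ => U V [].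
- move=> U V /opE; apply: Gen_mono => X Y OXY; split; first exact: Omega_sub.
  by apply: op_sub_Com; apply/opE; apply: sub_Gen.
Qed.
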